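(* Let $J$ be a Jacobi matrix and let $C_n,G_n$ be as defined in the context. (i) If $\sum_{n=1}^\infty[|b_n|+|a_n^2-1|]<\infty$, then for each $z\in\overline{\mathbb{D}}\setminus\{\pm1\}$, $A_0(z):=\sup_n[|G_n(z)|+|C_n(z)|]<\infty$, and $A_0(z)$ is bounded uniformly on compact subsets of $\overline{\mathbb{D}}\setminus\{\pm1\}$. (ii) If $\sum_{n=1}^\infty n[|b_n|+|a_n^2-1|]<\infty$, then there is a constant $A_1$ with $\sup_{n,\,z\in\overline{\mathbb{D}}}|G_n(z)|\le A_1$ and $\sup_{n,\,z\in\overline{\mathbb{D}}}\frac{|C_n(z)|}{1+n}\le A_1$. (iii) If $|b_n|+|a_n^2-1|\le CR^{-2n}$ for all $n$, for some $C$ and some $R>1$, then there is a constant $A_2$ such that for all $z$ with $|z|<R$ and all $n$, $|G_n(z)|+|C_n(z)|\le A_2(1+n)[\max(1,|z|)]^{2n}$.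
   Context: $J$ is a Jacobi matrix with diagonal entries $b_n\in\mathbb{R}$ and off-diagonal entries $a_n>0$ ($n\ge1$); set $a_0=1$. The orthonormal polynomials satisfy $p_{-1}=0$, $p_0=1$, $xp_n(x)=a_{n+1}p_{n+1}(x)+b_{n+1}p_n(x)+a_np_{n-1}(x)$. Define $c_n(z)=z^np_n(z+z^{-1})$, $g_n(z)=z^n\bigl(p_n(z+z^{-1})-a_nzp_{n-1}(z+z^{-1})\bigr)$, $C_n=a_1\cdots a_n\,c_n$, $G_n=a_1\cdots a_n\,g_n$ (polynomials in $z$). $\mathbb{D}=\{|z|<1\}$. *)

From HB Require Import structures.
From mathcomp Require Import all_boot all_order all_algebra.
From mathcomp Require Import all_classical all_reals all_analysis.
From mathcomp Require Import complex.
Set Implicit Arguments. Unset Strict Implicit. Unset Printing Implicit Defensive.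
Import Order.TTheory GRing.Theory Num.Theory numFieldNormedType.Exports.
Local Open Scope ring_scope.

(* Jacobi parameters: a n (n >= 1) off-diagonal, b n (n >= 1) diagonal;
   the values a 0, b 0 are irrelevant; the convention a_0 = 1 is [aa]. *)
Section Jacobi.
Variable R : realType.
Variables a b : nat -> R.

Definition aa (n : nat) : R := if n is 0 then 1 else a n.

(* ppair n = (p_{n-1}, p_n), with p_{-1} = 0, p_0 = 1 and
   x p_n = a_{n+1} p_{n+1} + b_{n+1} p_n + a_n p_{n-1}. *)
Fixpoint ppair (n : nat) : {poly R} * {poly R} :=
  match n with
  | 0 => (0, 1)
  | n'.+1 => let: (q, p) := ppair n' in
      (p, (a n'.+1)^-1 *: (('X - (b n'.+1)%:P) * p - aa n' *: q))
  end.

Definition opoly (n : nat) : {poly R} := (ppair n).2.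
Definition opoly_prev (n : nat) : {poly R} := (ppair n).1.

(* homog n q is the polynomial z |-> z^n q(z + z^{-1}), for deg q <= n:
   z^n (z + z^{-1})^k = z^{n-k} (1 + z^2)^k. *)
Definition homog (n : nat) (q : {poly R}) : {poly R} :=
  \sum_(k < size q) q`_k *: ('X^(n - k) * (1 + 'X^2) ^+ k).

Definition cpoly (n : nat) : {poly R} := homog n (opoly n).
Definition gpoly (n : nat) : {poly R} :=
  homog n (opoly n) - aa n *: ('X * homog n (opoly_prev n)).

Definition aprod (n : nat) : R := \prod_(1 <= i < n.+1) a i.

Definition Cpoly (n : nat) : {poly R} := aprod n *: cpoly n.
Definition Gpoly (n : nat) : {poly R} := aprod n *: gpoly n.

Definition Cn (n : nat) (z : R[i]) : R[i] :=
  (map_poly (real_complex R) (Cpoly n)).[z].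
Definition Gn (n : nat) (z : R[i]) : R[i] :=
  (map_poly (real_complex R) (Gpoly n)).[z].
End Jacobi.

(* identification R x R = C (the topology on C is the product topology) *)
Definition cplx (R : realType) (p : R * R) : R[i] := (p.1 +i* p.2)%C.

(* The normalised polynomials obey the recursion
     C_{n+1} = G_n + (z^2 - b_{n+1} z) C_n,    G_{n+1} = G_n + e_n C_n,
   where e_n = (1 - a_{n+1}^2) z^2 - b_{n+1} z is small:
   |e_n| <= d_n max(1,|z|)^2 with d_n = |b_{n+1}| + |a_{n+1}^2 - 1|.
   (i) For |z| <= 1 and z^2 <> 1 put w = 1/(1 - z^2) and H_n = C_n - w G_n; then
   H_{n+1} = z^2 H_n - (b_{n+1} z + w e_n) C_n, so |G_n| + |H_n| is multiplied at
   each step by at most 1 + 2 L^2 d_n with L = 1 + |w|, and a discrete Gronwall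
   argument bounds it by exp(2 L^2 sum d_n).  On a compact set avoiding +-1 the
   constant L is uniform because 1/|1 - z^2| is continuous there.
   (ii), (iii) Without dividing by 1 - z^2, induction gives |G_n| <= B_n and
   |C_n| <= (n+1) B_n as soon as B_{n+1} >= max(1,|z|)^2 (1 + (n+1) d_n) B_n; one may
   take B_n = max(1,|z|)^{2n} exp(sum_{k<n} (k+1) d_k), and under the hypothesis of
   (iii) that sum is dominated by a derivative of a geometric series. *)

From HB Require Import structures.
From mathcomp Require Import all_boot all_order all_algebra.
From mathcomp Require Import all_classical all_reals all_analysis.
From mathcomp Require Import complex.
From mathcomp Require Import ring lra.
Set Implicit Arguments. Unset Strict Implicit. Unset Printing Implicit Defensive.
Import Order.TTheory GRing.Theory Num.Theory numFieldNormedType.Exports Normc.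
Local Open Scope ring_scope.

Section JacobiPolynomials.
Variables (R : realType) (a b : nat -> R).
Implicit Types q : {poly R}.

Lemma ppairS n : ppair a b n.+1 = (opoly a b n,
  (a n.+1)^-1 *: (('X - (b n.+1)%:P) * opoly a b n - aa a n *: opoly_prev a b n)).
Proof. by rewrite /= /opoly /opoly_prev; case: (ppair a b n). Qed.

Lemma opoly_prevS n : opoly_prev a b n.+1 = opoly a b n.
Proof. by rewrite /opoly_prev ppairS. Qed.

Lemma opolyS n : opoly a b n.+1 =
  (a n.+1)^-1 *: (('X - (b n.+1)%:P) * opoly a b n - aa a n *: opoly_prev a b n).
Proof. by rewrite /opoly ppairS. Qed.

Lemma size_opoly_le n :
  (size (opoly_prev a b n) <= n)%N /\ (size (opoly a b n) <= n.+1)%N.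
Proof.
elim: n => [|n [IHprev IH]]; first by rewrite /opoly /opoly_prev /= size_poly0 size_poly1.
rewrite opoly_prevS opolyS; split => //.
rewrite (leq_trans (size_scale_leq _ _)) // (leq_trans (size_polyD _ _)) // geq_max.
rewrite (leq_trans (size_polyMleq _ _)) ?size_XsubC //= size_polyN.
by rewrite (leq_trans (size_scale_leq _ _)) // (leq_trans IHprev) // leqW.
Qed.

(* Unlike [homog n q], which sums over [k < size q], this is linear in [q]. *)
Definition homog_upto (N n : nat) (q : {poly R}) : {poly R} :=
  \sum_(k < N) q`_k *: ('X^(n - k) * (1 + 'X^2) ^+ k).

Lemma homog_uptoE N n q : (size q <= N)%N -> homog_upto N n q = homog n q.
Proof.
move=> szq; rewrite /homog_upto /homog.
rewrite (big_ord_widen N (fun k => q`_k *: ('X^(n - k) * (1 + 'X^2) ^+ k)) szq).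
rewrite [RHS]big_mkcond /=.
apply: eq_bigr => k _; case: ltnP => // /(nth_default 0) ->.
by rewrite scale0r.
Qed.

Fact homog_upto_is_linear N n : linear (homog_upto N n).
Proof.
move=> c p q; rewrite /homog_upto scaler_sumr -big_split /=.
by apply: eq_bigr => k _; rewrite coefD coefZ scalerDl scalerA.
Qed.

HB.instance Definition _ N n :=
  GRing.isLinear.Build R {poly R} {poly R} _ (homog_upto N n) (homog_upto_is_linear N n).

Lemma homog_uptoXM N n q :
  homog_upto N.+1 n.+1 ('X * q) = (1 + 'X^2) * homog_upto N n q.
Proof.
rewrite /homog_upto big_ord_recl coefXM /= scale0r add0r mulr_sumr.
apply: eq_bigr => k _; rewrite coefXM /= /bump /= add1n subSS exprS.
by rewrite -scalerAr mulrCA.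
Qed.

Lemma homog_uptoS N n q :
  (size q <= n.+1)%N -> homog_upto N n.+1 q = 'X * homog_upto N n q.
Proof.
move=> szq; rewrite /homog_upto mulr_sumr; apply: eq_bigr => k _.
have [kn|nk] := leqP k n; first by rewrite -scalerAr mulrA -exprS subSn.
by rewrite nth_default ?scale0r ?mulr0 // (leq_trans szq).
Qed.

Lemma homogS n q : (size q <= n.+1)%N -> homog n.+1 q = 'X * homog n q.
Proof. by move=> szq; rewrite -(homog_uptoE n.+1 szq) homog_uptoS ?homog_uptoE. Qed.

Let tail n := homog n (opoly_prev a b n).

Lemma cpolyS n : a n.+1 != 0 -> a n.+1 *: cpoly a b n.+1 =
  ((1 + 'X^2) - b n.+1 *: 'X) * cpoly a b n - aa a n *: ('X * tail n).
Proof.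
move=> an0; have [szprev szp] := size_opoly_le n.
have szp1 : (size (opoly a b n.+1) <= n.+2)%N by case: (size_opoly_le n.+1).
rewrite /cpoly -(homog_uptoE n.+1 szp1) opolyS linearZ scalerA mulfV // scale1r.
rewrite mulrBl mul_polyC !linearB !linearZ /= homog_uptoXM homog_uptoE //.
rewrite !homog_uptoS ?homog_uptoE ?(leq_trans szprev) ?(leq_trans szp) //.
  by rewrite /tail -!mul_polyC; ring.
exact: leqW.
Qed.

Lemma gpolyE n : gpoly a b n = cpoly a b n - aa a n *: ('X * tail n).
Proof. by []. Qed.

Lemma tailS n : tail n.+1 = 'X * cpoly a b n.
Proof. by rewrite /tail opoly_prevS homogS //; case: (size_opoly_le n). Qed.

Lemma aprodS n : aprod a n.+1 = aprod a n * a n.+1.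
Proof. by rewrite /aprod big_nat_recr. Qed.

Lemma Cpoly0 : Cpoly a b 0 = 1.
Proof.
rewrite /Cpoly /aprod big_geq // scale1r /cpoly /homog /opoly /= size_poly1.
by rewrite big_ord1 coefC scale1r mulr1.
Qed.

Lemma Gpoly0 : Gpoly a b 0 = 1.
Proof.
rewrite /Gpoly gpolyE /tail /homog /opoly_prev /= size_poly0 big_ord0 mulr0 scaler0 subr0.
by rewrite -Cpoly0 /Cpoly.
Qed.

Lemma CpolyS n : a n.+1 != 0 ->
  Cpoly a b n.+1 = Gpoly a b n + ('X^2 - b n.+1 *: 'X) * Cpoly a b n.
Proof.
move=> an0; rewrite /Cpoly /Gpoly aprodS -scalerA cpolyS // gpolyE -scalerAr.
rewrite -!mul_polyC; ring.
Qed.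

Lemma GpolyS n : Gpoly a b n.+1 = Cpoly a b n.+1 - (a n.+1 ^+ 2) *: ('X^2 * Cpoly a b n).
Proof.
rewrite /Gpoly /Cpoly gpolyE tailS aprodS -!mul_polyC !polyCM; ring.
Qed.

End JacobiPolynomials.
Local Open Scope complex_scope.

Section ComplexNorm.
Variable R : rcfType.
Implicit Types x y : R[i].

Lemma normcE x : `|x| = (normc x)%:C.
Proof. by rewrite normc_def; case: x. Qed.

Lemma normc_ge0 x : 0 <= normc x.
Proof. rewrite -lecR -normcE; exact: normr_ge0. Qed.

Lemma normcB x y : normc (x - y) <= normc x + normc y.
Proof. by rewrite -(normcN y); apply: le_normcD. Qed.

Lemma normc_real (r : R) : normc r%:C = `|r|.
Proof. by rewrite /normc /= expr0n addr0 sqrtr_sqr. Qed.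

Lemma max1_normcE x : Num.max 1 `|x| = (Num.max 1 (normc x))%:C.
Proof. by rewrite normcE /Order.max ltcR; case: ifP. Qed.

End ComplexNorm.

Section JacobiRecurrence.
Variables (R : realType) (a b : nat -> R).
Hypothesis a_pos : forall n, (0 < n)%N -> 0 < a n.
Implicit Types z : R[i].

Lemma Cn0 z : Cn a b 0 z = 1.
Proof. by rewrite /Cn Cpoly0 rmorph1 hornerC. Qed.

Lemma Gn0 z : Gn a b 0 z = 1.
Proof. by rewrite /Gn Gpoly0 rmorph1 hornerC. Qed.

Let ev z := horner_morph (fun x => mulrC z (real_complex R x)).

Lemma CnS n z : Cn a b n.+1 z = Gn a b n z + (z ^+ 2 - (b n.+1)%:C * z) * Cn a b n z.
Proof.
rewrite [LHS]/(ev z _) CpolyS ?gt_eqF ?a_pos // -mul_polyC.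
by rewrite !(rmorphD, rmorphN, rmorphM, rmorphXn) /= !(horner_morphC, horner_morphX) expr2.
Qed.

Lemma GnS n z :
  Gn a b n.+1 z = Cn a b n.+1 z - (a n.+1 ^+ 2)%:C * (z ^+ 2 * Cn a b n z).
Proof.
rewrite [LHS]/(ev z _) GpolyS -mul_polyC.
by rewrite !(rmorphD, rmorphN, rmorphM, rmorphXn) /= !(horner_morphC, horner_morphX) expr2.
Qed.

End JacobiRecurrence.

Section DiscreteGronwall.
Variable R : realType.

Lemma discrete_gronwall (x e : nat -> R) :
  (forall n, 0 <= x n) -> (forall n, x n.+1 <= x n * (1 + e n)) ->
  forall n, x n <= x 0 * expR (\sum_(k < n) e k).
Proof.
move=> x_ge0 x_step; elim=> [|n IH]; first by rewrite big_ord0 expR0 mulr1.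
rewrite big_ord_recr expRD mulrA (le_trans (x_step n)) //.
rewrite (le_trans (ler_wpM2l (x_ge0 n) (expR_ge1Dx (e n)))) //.
by rewrite ler_wpM2r ?expR_ge0.
Qed.

End DiscreteGronwall.

Section JacobiEstimates.
Variables (R : realType) (a b : nat -> R).
Hypothesis a_pos : forall n, (0 < n)%N -> 0 < a n.
Variable z : R[i].

Local Notation G n := (Gn a b n z).
Local Notation C n := (Cn a b n z).
Local Notation M := (Num.max 1 (normc z)).

Definition jacobi_dev n : R := `|b n.+1| + `|a n.+1 ^+ 2 - 1|.

Definition jacobi_pert n : R[i] := (1 - a n.+1 ^+ 2)%:C * z ^+ 2 - (b n.+1)%:C * z.

Lemma jacobi_dev_ge0 n : 0 <= jacobi_dev n.
Proof. by rewrite addr_ge0. Qed.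

Lemma GnS_pert n : G n.+1 = G n + jacobi_pert n * C n.
Proof. by rewrite GnS CnS // /jacobi_pert rmorphB /=; ring. Qed.

Lemma normc_le_max : normc z <= M.
Proof. by rewrite le_max lexx orbT. Qed.

Lemma normc_pert_le n : normc (jacobi_pert n) <= jacobi_dev n * M ^+ 2.
Proof.
have M_ge1 : 1 <= M by rewrite le_max lexx.
have := normc_le_max; have := normc_ge0 z => z_ge0 zM.
rewrite (le_trans (normcB _ _)) // !normcM !normc_real.
rewrite /jacobi_dev mulrDl addrC distrC lerD // ler_wpM2l //; nra.
Qed.

Section UnitDisk.
Variables (w : R[i]) (L : R).
Hypothesis w_inv : w * (1 - z ^+ 2) = 1.

Local Notation H n := (C n - w * G n).
Local Notation X n := (normc (G n) + normc (H n)).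

Lemma HnS n : H n.+1 = z ^+ 2 * H n - ((b n.+1)%:C * z + w * jacobi_pert n) * C n.
Proof.
apply/eqP; rewrite -subr_eq0; apply/eqP.
transitivity (G n * (1 - w * (1 - z ^+ 2))); last by rewrite w_inv subrr mulr0.
by rewrite GnS_pert CnS // /jacobi_pert; ring.
Qed.

Lemma normc_Cn_le n : normc w + 1 <= L -> normc (C n) <= L * X n.
Proof.
move=> w_le; have L_ge1 : 1 <= L by have := normc_ge0 w; lra.
have {1}-> : C n = H n + w * G n by rewrite subrK.
apply: le_trans (le_normcD _ _) _; rewrite normcM mulrDr [leRHS]addrC.
apply: lerD; first by rewrite ler_peMl ?normc_ge0.
by apply: ler_wpM2r; rewrite ?normc_ge0 //; lra.
Qed.

Lemma normc_GH_step n : normc z <= 1 -> normc w + 1 <= L ->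
  X n.+1 <= X n * (1 + 2 * L ^+ 2 * jacobi_dev n).
Proof.
move=> z_le1 w_le.
have d_ge0 := jacobi_dev_ge0 n.
have L_ge1 : 1 <= L by have := normc_ge0 w; lra.
have pert_le : normc (jacobi_pert n) <= jacobi_dev n.
  by rewrite -[leRHS]mulr1 -(expr1n _ 2) -(max_l z_le1) normc_pert_le.
have G_le : normc (G n.+1) <= normc (G n) + jacobi_dev n * normc (C n).
  rewrite GnS_pert (le_trans (le_normcD _ _)) // normcM lerD2l.
  by rewrite ler_wpM2r ?normc_ge0.
have coef_le : `|b n.+1| * normc z + normc w * normc (jacobi_pert n) <= L * jacobi_dev n.
  have := normc_ge0 z; have := normc_ge0 w; have := normr_ge0 (b n.+1).
  have : `|b n.+1| <= jacobi_dev n by rewrite /jacobi_dev lerDl.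
  nra.
have H_le : normc (H n.+1) <= normc (H n) + L * jacobi_dev n * normc (C n).
  rewrite HnS (le_trans (normcB _ _)) // !normcM; apply: lerD.
    by rewrite ler_piMl ?normc_ge0 ?mulr_ile1 ?normc_ge0.
  rewrite ler_wpM2r ?normc_ge0 // (le_trans (le_normcD _ _)) //.
  by rewrite !normcM normc_real.
have C_le : (1 + L) * jacobi_dev n * normc (C n) <= (1 + L) * jacobi_dev n * (L * X n).
  by rewrite ler_wpM2l ?normc_Cn_le // mulr_ge0 //; lra.
have L_le : (1 + L) * jacobi_dev n * (L * X n) <= 2 * L ^+ 2 * jacobi_dev n * X n.
  rewrite -subr_ge0.
  have -> : 2 * L ^+ 2 * jacobi_dev n * X n - (1 + L) * jacobi_dev n * (L * X n)
      = (L - 1) * L * (jacobi_dev n * X n) by ring.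
  by rewrite !mulr_ge0 ?subr_ge0 ?addr_ge0 ?normc_ge0 // (le_trans ler01).
lra.
Qed.

Lemma GC_bounded_disk S : normc z <= 1 -> normc w + 1 <= L ->
  (forall N, \sum_(k < N) jacobi_dev k <= S) ->
  forall n, normc (G n) + normc (C n) <= 4 * L ^+ 2 * expR (2 * L ^+ 2 * S).
Proof.
move=> z_le1 w_le sum_le n.
have L_ge1 : 1 <= L by have := normc_ge0 w; lra.
have X0_le : X 0 <= 2 * L.
  by rewrite Gn0 Cn0 mulr1 normc1; have := normcB 1 w; rewrite normc1; lra.
have X_le : X n <= 2 * L * expR (2 * L ^+ 2 * S).
  have X_ge0 k : 0 <= X k by rewrite addr_ge0 ?normc_ge0.
  apply: le_trans (discrete_gronwall (x := fun k => X k) X_ge0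
    (fun k => normc_GH_step k z_le1 w_le) n) _.
  rewrite -mulr_sumr; apply: ler_pM; rewrite ?X_ge0 ?expR_ge0 ?ler_expR //.
  by apply: ler_wpM2l; [rewrite mulr_ge0 ?sqr_ge0 | exact: sum_le].
have := normc_Cn_le n w_le; have := normc_ge0 (H n); have := normc_ge0 (G n).
nra.
Qed.

End UnitDisk.

Lemma GC_growth (B : nat -> R) : 1 <= B 0 -> (forall n, 0 <= B n) ->
  (forall n, M ^+ 2 * (1 + n.+1%:R * jacobi_dev n) * B n <= B n.+1) ->
  forall n, normc (G n) <= B n /\ normc (C n) <= n.+1%:R * B n.
Proof.
move=> B0 B_ge0 B_step; elim=> [|n [G_le C_le]]; first by rewrite Gn0 Cn0 normc1 mul1r.
have M_ge1 : 1 <= M by rewrite le_max lexx.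
have zM := normc_le_max; have z_ge0 := normc_ge0 z; have d_ge0 := jacobi_dev_ge0 n.
have m_ge0 : 0 <= n.+1%:R :> R by [].
have M2B : B n <= M ^+ 2 * B n by rewrite ler_peMl ?B_ge0 // exprn_ege1.
have pert_C : normc (jacobi_pert n) * normc (C n)
    <= jacobi_dev n * M ^+ 2 * (n.+1%:R * B n).
  by rewrite ler_pM ?normc_ge0 ?normc_pert_le.
have coef_le : normc (z ^+ 2 - (b n.+1)%:C * z) <= M ^+ 2 * (1 + jacobi_dev n).
  rewrite (le_trans (normcB _ _)) // !normcM normc_real mulrDr mulr1 lerD //.
    by rewrite expr2 ler_pM.
  rewrite [leRHS]mulrC ler_pM ?normr_ge0 ?lerDl //.
  by rewrite (le_trans zM) // expr2 ler_peMl // (le_trans ler01).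
have coef_C : normc (z ^+ 2 - (b n.+1)%:C * z) * normc (C n)
    <= M ^+ 2 * (1 + jacobi_dev n) * (n.+1%:R * B n).
  by rewrite ler_pM ?normc_ge0.
have step := B_step n; have Bn_ge0 := B_ge0 n; split.
  by rewrite GnS_pert (le_trans (le_normcD _ _)) // normcM; nra.
rewrite CnS // (le_trans (le_normcD _ _)) // normcM -[n.+2]addn1 natrD.
have : 0 <= (M ^+ 2 - 1) * B n by rewrite mulr_ge0 ?B_ge0 // subr_ge0 exprn_ege1.
have : 0 <= M ^+ 2 * n.+1%:R ^+ 2 * jacobi_dev n * B n.
  by rewrite !mulr_ge0 ?B_ge0 ?(le_trans ler01 M_ge1).
nra.
Qed.

Lemma GC_polynomial_bound S :
  (forall N, \sum_(k < N) k.+1%:R * jacobi_dev k <= S) ->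
  forall n, normc (G n) <= M ^+ (2 * n) * expR S /\
            normc (C n) <= n.+1%:R * (M ^+ (2 * n) * expR S).
Proof.
move=> sum_le n.
pose B k := M ^+ (2 * k) * expR (\sum_(i < k) i.+1%:R * jacobi_dev i).
have M_ge0 : 0 <= M by rewrite le_max ler01.
have B_ge0 k : 0 <= B k by rewrite mulr_ge0 ?exprn_ge0 ?expR_ge0.
have B_step k : M ^+ 2 * (1 + k.+1%:R * jacobi_dev k) * B k <= B k.+1.
  have -> : B k.+1 = M ^+ 2 * expR (k.+1%:R * jacobi_dev k) * B k.
    by rewrite /B big_ord_recr expRD mulnS exprD; ring.
  by apply: ler_wpM2r => //; apply: ler_wpM2l; rewrite ?exprn_ge0 ?expR_ge1Dx.
have B_le : B n <= M ^+ (2 * n) * expR S.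
  by rewrite ler_wpM2l ?exprn_ge0 // ler_expR.
have [|G_le C_le] := GC_growth (B := B) _ B_ge0 B_step n.
  by rewrite /B big_ord0 expR0 mulr1.
split; first exact: le_trans G_le B_le.
exact: le_trans C_le (ler_wpM2l (ler0n _ _) B_le).
Qed.

End JacobiEstimates.

Section Series.
Variable R : realType.

Lemma nneseries_partial_ub (f : nat -> R) : (forall n, 0 <= f n) ->
  (\sum_(1 <= n <oo) (f n)%:E < +oo)%E -> exists S, forall N, \sum_(k < N) f k.+1 <= S.
Proof.
move=> f_ge0 f_fin.
have partial_le N : (\sum_(1 <= k < N) (f k)%:E <= \sum_(1 <= n <oo) (f n)%:E)%E.
  by apply: nneseries_lim_ge => n _ _; rewrite lee_fin.
have sum_ge0 : (0 <= \sum_(1 <= n <oo) (f n)%:E)%E.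
  by apply: le_trans (partial_le 0%N); rewrite big_geq.
have sum_fin : (\sum_(1 <= n <oo) (f n)%:E)%E \is a fin_num by rewrite ge0_fin_numE.
exists (fine (\sum_(1 <= n <oo) (f n)%:E)%E) => N.
rewrite -lee_fin fineK //; apply: le_trans (partial_le N.+1).
by rewrite sumEFin big_add1 /= big_mkord.
Qed.

Lemma sum_geometric_deriv_le (q : R) : 0 <= q -> q < 1 ->
  forall N, \sum_(k < N) k.+1%:R * q ^+ k <= ((1 - q) ^+ 2)^-1.
Proof.
move=> q_ge0 q_lt1 N.
have sumE : (1 - q) ^+ 2 * \sum_(k < N) k.+1%:R * q ^+ k
    = 1 - N.+1%:R * q ^+ N + N%:R * q ^+ N.+1.
  elim: N => [|N IH]; first by rewrite big_ord0 mulr0 expr0 mulr1 mul0r; ring.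
  rewrite big_ord_recr /= mulrDr IH !exprS -[N.+2]addn1 -[N.+1]addn1 !natrD; ring.
have q2_gt0 : 0 < (1 - q) ^+ 2 by rewrite exprn_gt0 // subr_gt0.
rewrite -[leRHS]mul1r ler_pdivlMr // mulrC sumE.
have N_ge0 := ler0n R N.
have : N%:R * q <= N%:R :> R by nra.
have : 0 <= q ^+ N := exprn_ge0 N q_ge0.
rewrite exprS -[N.+1]addn1 natrD; nra.
Qed.

Lemma sum_weighted_geometric_ub (d : nat -> R) (c q : R) : 0 <= q -> q < 1 ->
  (forall k, d k <= c * q ^+ k.+1) ->
  forall N, \sum_(k < N) k.+1%:R * d k <= `|c| * q * ((1 - q) ^+ 2)^-1.
Proof.
move=> q_ge0 q_lt1 d_le N.
apply: le_trans (_ : _ <= \sum_(k < N) `|c| * q * (k.+1%:R * q ^+ k)) _.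
  apply: ler_sum => k _; rewrite mulrCA ler_wpM2l // -mulrA -exprS.
  by rewrite (le_trans (d_le k)) // ler_wpM2r ?exprn_ge0 ?ler_norm.
by rewrite -mulr_sumr ler_wpM2l ?mulr_ge0 ?sum_geometric_deriv_le.
Qed.

End Series.

Section CompactBound.
Variable R : realType.
Local Open Scope classical_set_scope.

Lemma compact_continuous_ub (T : topologicalType) (K : set T) (f : T -> R) :
  compact K -> {in K, continuous f} -> exists B, forall p, K p -> f p <= B.
Proof.
move=> K_compact f_cont.
have /compact_bounded [B [_ B_ub]] : compact (f @` K).
  by apply: continuous_compact K_compact; apply: continuous_in_subspaceT.
exists (B + 1) => p Kp; apply: le_trans (ler_norm _) _.
by apply: (B_ub (B + 1)); [rewrite ltrDl | exists p].
Qed.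

Definition sqnorm_one_sub_sqr (p : R * R) : R :=
  (1 - p.1 ^+ 2 + p.2 ^+ 2) ^+ 2 + (2 * p.1 * p.2) ^+ 2.

Lemma normc_one_sub_sqr p : normc (1 - cplx p ^+ 2) ^+ 2 = sqnorm_one_sub_sqr p.
Proof.
case: p => x y; rewrite /cplx expr2 /=; simpc.
by rewrite -expr2 sqr_sqrtr ?addr_ge0 ?sqr_ge0 // /sqnorm_one_sub_sqr /=; ring.
Qed.

Lemma sqnorm_one_sub_sqr_continuous : continuous sqnorm_one_sub_sqr.
Proof.
move=> p.
have fst_cont : (fun q : R * R => q.1) @ p --> p.1 := cvg_fst.
have snd_cont : (fun q : R * R => q.2) @ p --> p.2 := cvg_snd.
have cst_cont (c : R) : (fun=> c) @ p --> c := cvg_cst c.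
have re_cont : (fun q : R * R => 1 - q.1 ^+ 2 + q.2 ^+ 2) @ p --> 1 - p.1 ^+ 2 + p.2 ^+ 2.
  by apply: cvgD; [apply: cvgB; [exact: cst_cont | apply: cvgM; exact: fst_cont]
                 | apply: cvgM; exact: snd_cont].
have im_cont : (fun q : R * R => 2 * q.1 * q.2) @ p --> 2 * p.1 * p.2.
  by apply: cvgM; [apply: cvgM; [exact: cst_cont | exact: fst_cont] | exact: snd_cont].
by apply: cvgD; apply: cvgM; first [exact: re_cont | exact: im_cont].
Qed.

Lemma compact_ub_normc_inv_one_sub_sqr (K : set (R * R)) : compact K ->
  (forall p, K p -> cplx p ^+ 2 != 1) ->
  exists B, forall p, K p -> normc (1 - cplx p ^+ 2)^-1 <= B.
Proof.
move=> K_compact K_sqr_neq1.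
have sqnorm_neq0 p : K p -> sqnorm_one_sub_sqr p != 0.
  move=> Kp; rewrite -normc_one_sub_sqr sqrf_eq0.
  by apply: contra (K_sqr_neq1 p Kp) => /eqP/Normc.eq0_normc/eqP; rewrite subr_eq0 eq_sym.
have [B B_ub] : exists B, forall p, K p -> (sqnorm_one_sub_sqr p)^-1 <= B.
  apply: compact_continuous_ub K_compact _ => p; rewrite inE => Kp.
  by apply: (@cvgV _ _ (nbhs p)); [exact: sqnorm_neq0 | exact: sqnorm_one_sub_sqr_continuous].
exists (1 + `|B|) => p Kp.
have := normc_ge0 (1 - cplx p ^+ 2)^-1.
have : normc (1 - cplx p ^+ 2)^-1 ^+ 2 <= `|B|.
  by rewrite normcV exprVn normc_one_sub_sqr (le_trans (B_ub p Kp) (ler_norm B)).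
have := normr_ge0 B; nra.
Qed.

End CompactBound.

Section JacobiBounds.
Variables (R : realType) (a b : nat -> R).
Hypothesis a_pos : forall n, (0 < n)%N -> 0 < a n.

Lemma GC_bounded_off_pm1 (S L : R) (z : R[i]) :
  (forall N, \sum_(k < N) jacobi_dev a b k <= S) ->
  `|z| <= 1 -> z ^+ 2 != 1 -> normc (1 - z ^+ 2)^-1 + 1 <= L ->
  forall n, `|Gn a b n z| + `|Cn a b n z| <= (4 * L ^+ 2 * expR (2 * L ^+ 2 * S))%:C.
Proof.
move=> sum_le; rewrite normcE lecR => z_le1 z2_neq1 L_ge n.
rewrite !normcE -rmorphD lecR; apply: (GC_bounded_disk a_pos _ z_le1 L_ge sum_le).
by rewrite mulVf // subr_eq0 eq_sym.
Qed.

Lemma GC_bounded_pointwise (S : R) (z : R[i]) :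
  (forall N, \sum_(k < N) jacobi_dev a b k <= S) ->
  `|z| <= 1 -> z != 1 -> z != -1 ->
  exists M : R, forall n, `|Gn a b n z| + `|Cn a b n z| <= M%:C.
Proof.
move=> sum_le z_le1 z_neq1 z_neqN1.
have z2_neq1 : z ^+ 2 != 1 by rewrite sqrf_eq1 negb_or z_neq1.
by eexists; apply: GC_bounded_off_pm1 sum_le z_le1 z2_neq1 (lexx _).
Qed.

Lemma GC_bounded_on_compact (S : R) (K : set (R * R)) :
  (forall N, \sum_(k < N) jacobi_dev a b k <= S) -> compact K ->
  (forall p, K p -> `|cplx p| <= 1 /\ cplx p != 1 /\ cplx p != -1) ->
  exists M : R, forall p, K p -> forall n,
    `|Gn a b n (cplx p)| + `|Cn a b n (cplx p)| <= M%:C.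
Proof.
move=> sum_le K_compact K_disk.
have K_sqr_neq1 p : K p -> cplx p ^+ 2 != 1.
  by case/K_disk => _ [? ?]; rewrite sqrf_eq1 negb_or; apply/andP.
have [B B_ub] := compact_ub_normc_inv_one_sub_sqr K_compact K_sqr_neq1.
exists (4 * (B + 1) ^+ 2 * expR (2 * (B + 1) ^+ 2 * S)) => p Kp.
apply: GC_bounded_off_pm1 sum_le _ (K_sqr_neq1 p Kp) _; first by case: (K_disk p Kp).
by rewrite lerD2r B_ub.
Qed.

Lemma GC_bounded_closed_disk (S : R) :
  (forall N, \sum_(k < N) k.+1%:R * jacobi_dev a b k <= S) ->
  exists A1 : R, forall n (z : R[i]), `|z| <= 1 ->
    `|Gn a b n z| <= A1%:C /\ `|Cn a b n z| / (1 + n%:R) <= A1%:C.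
Proof.
move=> sum_le; exists (expR S) => n z; rewrite normcE lecR => z_le1.
have [] := GC_polynomial_bound a_pos z sum_le n.
rewrite max_l // expr1n mul1r !normcE lecR => G_le C_le; split => //.
have -> : 1 + n%:R = n.+1%:R%:C :> R[i] by rewrite rmorph_nat -natr1 addrC.
by rewrite -fmorph_div lecR ler_pdivrMr ?ltr0Sn // mulrC.
Qed.

Lemma GC_exponential_growth (Cc Rr : R) : 1 < Rr ->
  (forall n, (0 < n)%N -> `|b n| + `|a n ^+ 2 - 1| <= Cc * Rr ^- (2 * n)) ->
  exists A2 : R, forall (z : R[i]) n,
    `|Gn a b n z| + `|Cn a b n z| <= A2%:C * (1 + n%:R) * (Num.max 1 `|z|) ^+ (2 * n).
Proof.
move=> Rr_gt1 dev_le.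
have Rr2_gt1 : 1 < Rr ^+ 2 by rewrite exprn_egt1.
have q_ge0 : 0 <= Rr ^- 2 by rewrite invr_ge0 exprn_ge0 // ltW // (lt_trans ltr01).
have q_lt1 : Rr ^- 2 < 1 by rewrite invf_lt1 // (lt_trans ltr01).
have dev_geom k : jacobi_dev a b k <= Cc * (Rr ^- 2) ^+ k.+1.
  by rewrite /jacobi_dev -exprVn -exprM exprVn dev_le.
have sum_le := sum_weighted_geometric_ub q_ge0 q_lt1 dev_geom.
exists (2 * expR (`|Cc| * Rr ^- 2 * ((1 - Rr ^- 2) ^+ 2)^-1)) => z n.
have [G_le C_le] := GC_polynomial_bound a_pos z sum_le n.
have -> : 1 + n%:R = (1 + n%:R)%:C :> R[i] by rewrite rmorphD rmorph1 rmorph_nat.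
rewrite max1_normcE !normcE -rmorphD -rmorphXn -!rmorphM lecR -natr1 in C_le *.
have Y_ge0 : 0 <= Num.max 1 (normc z) ^+ (2 * n)
                   * expR (`|Cc| * Rr ^- 2 * ((1 - Rr ^- 2) ^+ 2)^-1).
  by rewrite mulr_ge0 ?expR_ge0 // exprn_ge0 // le_max ler01.
have := mulr_ge0 (ler0n R n) Y_ge0; lra.
Qed.

End JacobiBounds.

Theorem theoremA2 (R : realType) (a b : nat -> R) :
  (forall n, (0 < n)%N -> 0 < a n) ->
  (* (i) *)
  ((\sum_(1 <= n <oo) ((`|b n| + `|a n ^+ 2 - 1|)%:E) < +oo)%E ->
     (forall z : R[i], `|z| <= 1 -> z != 1 -> z != -1 ->
        exists M : R, forall n, `|Gn a b n z| + `|Cn a b n z| <= M%:C)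
     /\
     (forall K : set (R * R)%type, compact K ->
        (forall p, K p -> `|cplx p| <= 1 /\ cplx p != 1 /\ cplx p != -1) ->
        exists M : R, forall p, K p -> forall n,
          `|Gn a b n (cplx p)| + `|Cn a b n (cplx p)| <= M%:C))
  /\
  (* (ii) *)
  ((\sum_(1 <= n <oo) ((n%:R * (`|b n| + `|a n ^+ 2 - 1|))%:E) < +oo)%E ->
     exists A1 : R, forall n (z : R[i]), `|z| <= 1 ->
        `|Gn a b n z| <= A1%:C /\ `|Cn a b n z| / (1 + n%:R) <= A1%:C)
  /\
  (* (iii) *)
  (forall Cc Rr : R, 1 < Rr ->
     (forall n, (0 < n)%N -> `|b n| + `|a n ^+ 2 - 1| <= Cc * Rr ^- (2 * n)) ->
     exists A2 : R, forall (z : R[i]) n, `|z| < Rr%:C ->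
        `|Gn a b n z| + `|Cn a b n z|
          <= A2%:C * (1 + n%:R) * (Num.max 1 `|z|) ^+ (2 * n)).
Proof.
move=> a_pos.
have dev_ge0 n : 0 <= `|b n| + `|a n ^+ 2 - 1| by rewrite addr_ge0.
split; [|split].
- move=> /(nneseries_partial_ub dev_ge0) [S sum_le]; split => *.
    exact: GC_bounded_pointwise sum_le _ _ _.
  exact: GC_bounded_on_compact sum_le _ _.
- move=> /(nneseries_partial_ub (fun n => mulr_ge0 (ler0n R n) (dev_ge0 n))) [S sum_le].
  exact: GC_bounded_closed_disk sum_le.
- move=> Cc Rr Rr_gt1 dev_le.
  have [A2 GC_le] := GC_exponential_growth a_pos Rr_gt1 dev_le.
  by exists A2 => z n _.
Qed.
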